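(* Let $h:\mathbb{R}\to\mathbb{R}$ be a smooth function with $h(T)=\pi/2$ for $T\le 0$, $0<h(T)<\pi/2$ for $0<T<1$, and $h(T)=0$ for $T\ge 1$. For $0\le T<1$ define $B(T)=\exp\left(\int_0^T \cot\bigl(h(z)\bigr)\,dz\right)$. Then $B(T)\to\infty$ as $T\to 1_-$, and for every integer $n\ge 0$ the $n$-th derivative of $1/B$ satisfies $\frac{d^n}{dT^n}\bigl(1/B(T)\bigr)\to 0$ as $T\to 1_-$.
   Context: Here $\cot$ denotes the cotangent; note that $\cot h(T)>0$ for $0<T<1$. *)

From Stdlib Require Import Reals.
From Coquelicot Require Import Coquelicot.
Open Scope R_scope.

Definition cot (x : R) : R := cos x / sin x.

Definition smooth (h : R -> R) : Prop := forall (n : nat) (x : R), ex_derive_n h n x.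

Definition B (h : R -> R) (T : R) : R := exp (RInt (fun z => cot (h z)) 0 T).

From Stdlib Require Import Reals Lra Lia.
From Coquelicot Require Import Coquelicot.
Open Scope R_scope.

(* With s := sin o h, the function u := 1 / B solves u' = - (cot o h) u on
   (-oo, 1), and cot o h >= 1 / s - 1 there.  Since s >= 0 vanishes at 1, also
   s'(1) = 0, so for every n the function s is (1/n)-Lipschitz near 1; comparing
   u with exp (-z) / (s T + (T - z) / n) ^ n on [T - d, T] then gives
   u(T) = O(s(T) ^ n) as T -> 1-.  By induction the n-th derivative of u is
   (a_n / s ^ n) u with a_n smooth, hence it is O(s) and tends to 0; the case
   n = 0 gives B = 1 / u -> +oo. *)

(* An inductive variant of [smooth], convenient for closure under products. *)
Fixpoint Cn (n : nat) (f : R -> R) : Prop :=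
  match n with
  | O => True
  | S m => (forall x, ex_derive f x) /\ Cn m (Derive f)
  end.

Definition Cinf (f : R -> R) : Prop := forall n, Cn n f.

Lemma Cn_S n f : Cn (S n) f -> Cn n f.
Proof.
  revert f; induction n as [|n IH]; intros f Hf; [exact I|].
  destruct Hf as [Hf Hdf]; split; [exact Hf | exact (IH _ Hdf)].
Qed.

Lemma Cn_ext n f g : (forall x, f x = g x) -> Cn n f -> Cn n g.
Proof.
  revert f g; induction n as [|n IH]; intros f g Hfg Hf; [exact I|].
  destruct Hf as [Hf Hdf]; split.
  - intros x; exact (ex_derive_ext f g x Hfg (Hf x)).
  - apply (IH (Derive f)); [|exact Hdf].
    intros x; apply Derive_ext; exact Hfg.
Qed.

Lemma Cn_const n c : Cn n (fun _ => c).
Proof.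
  revert c; induction n as [|n IH]; intros c; [exact I|]; split.
  - intros x; apply ex_derive_const.
  - apply (Cn_ext _ (fun _ => 0)); [|apply IH].
    intros x; symmetry; apply Derive_const.
Qed.

Lemma Cn_plus n f g : Cn n f -> Cn n g -> Cn n (fun x => f x + g x).
Proof.
  revert f g; induction n as [|n IH]; intros f g Hf Hg; [exact I|].
  destruct Hf as [Hf Hdf], Hg as [Hg Hdg]; split.
  - intros x; apply (ex_derive_plus f g); auto.
  - apply (Cn_ext _ (fun x => Derive f x + Derive g x)); [|apply IH; auto].
    intros x; symmetry; apply Derive_plus; auto.
Qed.

Lemma Cn_minus n f g : Cn n f -> Cn n g -> Cn n (fun x => f x - g x).
Proof.
  revert f g; induction n as [|n IH]; intros f g Hf Hg; [exact I|].
  destruct Hf as [Hf Hdf], Hg as [Hg Hdg]; split.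
  - intros x; apply (ex_derive_minus f g); auto.
  - apply (Cn_ext _ (fun x => Derive f x - Derive g x)); [|apply IH; auto].
    intros x; symmetry; apply Derive_minus; auto.
Qed.

Lemma Cn_mult n f g : Cn n f -> Cn n g -> Cn n (fun x => f x * g x).
Proof.
  revert f g; induction n as [|n IH]; intros f g Hf Hg; [exact I|].
  pose proof (Cn_S _ _ Hf) as Hf'; pose proof (Cn_S _ _ Hg) as Hg'.
  destruct Hf as [Hf Hdf], Hg as [Hg Hdg]; split.
  - intros x; apply (ex_derive_mult f g); auto.
  - apply (Cn_ext _ (fun x => Derive f x * g x + f x * Derive g x)).
    + intros x; symmetry; apply Derive_mult; auto.
    + apply Cn_plus; apply IH; auto.
Qed.

Lemma Cn_sin_cos n f : Cn n f -> Cn n (fun x => sin (f x)) /\ Cn n (fun x => cos (f x)).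
Proof.
  revert f; induction n as [|n IH]; intros f Hf; [split; exact I|].
  destruct (IH f (Cn_S _ _ Hf)) as [Hsin Hcos].
  destruct Hf as [Hf Hdf]; split; split.
  - intros x; auto_derive; auto.
  - apply (Cn_ext _ (fun x => cos (f x) * Derive f x)); [|apply Cn_mult; auto].
    intros x; symmetry; apply is_derive_unique.
    auto_derive; [apply Hf | rewrite Rmult_1_l; apply Rmult_comm].
  - intros x; auto_derive; auto.
  - apply (Cn_ext _ (fun x => - sin (f x) * Derive f x)).
    + intros x; symmetry; apply is_derive_unique.
      auto_derive; [apply Hf | rewrite Rmult_1_l; apply Rmult_comm].
    + apply Cn_mult; auto. apply (Cn_ext _ (fun x => 0 - sin (f x))).
      * intros x; ring.
      * apply Cn_minus; [apply Cn_const | exact Hsin].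
Qed.

Lemma Cinf_const c : Cinf (fun _ => c).
Proof. intros n; apply Cn_const. Qed.

Lemma Cinf_minus f g : Cinf f -> Cinf g -> Cinf (fun x => f x - g x).
Proof. intros Hf Hg n; apply Cn_minus; auto. Qed.

Lemma Cinf_mult f g : Cinf f -> Cinf g -> Cinf (fun x => f x * g x).
Proof. intros Hf Hg n; apply Cn_mult; auto. Qed.

Lemma Cinf_sin f : Cinf f -> Cinf (fun x => sin (f x)).
Proof. intros Hf n; apply Cn_sin_cos, Hf. Qed.

Lemma Cinf_cos f : Cinf f -> Cinf (fun x => cos (f x)).
Proof. intros Hf n; apply Cn_sin_cos, Hf. Qed.

Lemma Cinf_Derive f : Cinf f -> Cinf (Derive f).
Proof. intros Hf n; exact (proj2 (Hf (S n))). Qed.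

Lemma Cinf_ex_derive f x : Cinf f -> ex_derive f x.
Proof. intros Hf; exact (proj1 (Hf 1%nat) x). Qed.

Lemma Cinf_continuous f x : Cinf f -> continuous f x.
Proof. intros Hf; exact (ex_derive_continuous f x (Cinf_ex_derive f x Hf)). Qed.

Lemma smooth_Cinf f : smooth f -> Cinf f.
Proof.
  intros Hf n. enough (Hk : forall k, Cn n (Derive_n f k)) by exact (Hk O).
  induction n as [|n IH]; intros k; [exact I|]. split.
  - intros x; exact (Hf (S k) x).
  - exact (IH (S k)).
Qed.

Lemma is_derive_nonpos_le f df a b : a <= b ->
  (forall x, a <= x <= b -> is_derive f x (df x) /\ df x <= 0) -> f b <= f a.
Proof.
  intros Hab Hf.
  destruct (MVT_gen f a b df) as [c [Hc Hfc]].
  - intros x Hx; rewrite Rmin_left, Rmax_right in Hx by lra; apply Hf; lra.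
  - intros x Hx; rewrite Rmin_left, Rmax_right in Hx by lra.
    apply continuity_pt_filterlim, (ex_derive_continuous f x).
    exists (df x); apply Hf; lra.
  - rewrite Rmin_left, Rmax_right in Hc by lra.
    destruct (Hf c Hc) as [_ Hdc]. nra.
Qed.

Lemma filterlim_0_of_abs_le {T} (F : (T -> Prop) -> Prop) {FF : Filter F} (f g : T -> R) C :
  F (fun x => Rabs (f x) <= C * g x) -> filterlim g F (locally 0) ->
  filterlim f F (locally 0).
Proof.
  intros Hfg Hg. apply filterlim_locally; intros eps.
  assert (HC : 0 < Rabs C + 1) by (pose proof (Rabs_pos C); lra).
  assert (Heps : 0 < eps / (Rabs C + 1)) by (apply Rdiv_lt_0_compat; [apply cond_pos | exact HC]).
  apply (filterlim_locally g 0) with (eps := mkposreal _ Heps) in Hg.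
  refine (filter_imp _ _ _ (filter_and _ _ Hfg Hg)).
  intros x [Hf Hgx]; change (Rabs (f x - 0) < eps).
  change (Rabs (g x - 0) < eps / (Rabs C + 1)) in Hgx.
  rewrite Rminus_0_r in *.
  assert (C * g x <= Rabs C * Rabs (g x)) by (rewrite <- Rabs_mult; apply Rle_abs).
  assert (Rabs C * Rabs (g x) <= Rabs C * (eps / (Rabs C + 1)))
    by (apply Rmult_le_compat_l; [apply Rabs_pos | lra]).
  assert (Rabs C * (eps / (Rabs C + 1)) < eps).
  { apply (Rmult_lt_reg_r (Rabs C + 1)); [exact HC|]. field_simplify; [|lra].
    pose proof (cond_pos eps); nra. }
  lra.
Qed.

Lemma is_derive_exp_div_pow (n : nat) (a T z : R) :
  (0 < n)%nat -> 0 < a + (T - z) / INR n ->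
  is_derive (fun z => exp (- z) / (a + (T - z) / INR n) ^ n) z
    (exp (- z) / (a + (T - z) / INR n) ^ n * (/ (a + (T - z) / INR n) - 1)).
Proof.
  intros Hn Hq. assert (HN : 0 < INR n) by (apply lt_0_INR; lia).
  set (q := a + (T - z) / INR n) in *.
  auto_derive; change (a + (T + - z) * / INR n) with q.
  - apply pow_nonzero; lra.
  - destruct n as [|m]; [lia|]. rewrite <- tech_pow_Rmult. simpl pred.
    field. split; [lra|]. split; [apply pow_nonzero; lra | lra].
Qed.

Lemma is_derive_div_pow (f s : R -> R) (n : nat) (x df ds : R) :
  is_derive f x df -> is_derive s x ds -> s x <> 0 ->
  is_derive (fun y => f y / s y ^ n) x ((df * s x - INR n * f x * ds) / s x ^ S n).
Proof.
  intros Hf Hs Hsx.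
  replace ((df * s x - INR n * f x * ds) / s x ^ S n)
    with ((df * s x ^ n - f x * (INR n * ds * s x ^ pred n)) / (s x ^ n) ^ 2).
  - apply is_derive_div; [exact Hf | apply is_derive_pow, Hs | apply pow_nonzero, Hsx].
  - assert (Hsn : forall k, s x ^ k <> 0) by (intros k; apply pow_nonzero, Hsx).
    destruct n as [|m]; simpl; field; auto.
Qed.

Section Comparison.

Variables (u g s : R -> R) (n : nat) (T d : R).
Hypothesis n_pos : (0 < n)%nat.
Hypothesis u_ode : forall z, T - d <= z <= T -> is_derive u z (- g z * u z) /\ 0 <= u z.
Hypothesis g_ge : forall z, T - d <= z <= T -> 0 < s z /\ / s z - 1 <= g z.
Hypothesis s_le : forall z, T - d <= z <= T -> s z <= s T + (T - z) / INR n.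

(* With q z := s T + (T - z) / n, the function u z * exp (- z) / q z ^ n is
   nonincreasing on [T - d, T]: its logarithmic derivative is
   1 / q - 1 - g <= 1 / s - 1 - g <= 0. *)
Lemma le_exp_div_pow_mul : 0 <= d ->
  u T * (exp (- T) / s T ^ n) <= u (T - d) * (exp (- (T - d)) / (s T + d / INR n) ^ n).
Proof.
  intros Hd. assert (HN : 0 < INR n) by (apply lt_0_INR; lia).
  set (q z := s T + (T - z) / INR n).
  replace (s T + d / INR n) with (q (T - d)) by (unfold q; f_equal; f_equal; ring).
  replace (s T) with (q T) by (unfold q; unfold Rdiv; ring).
  apply (is_derive_nonpos_le (fun z => u z * (exp (- z) / q z ^ n))
           (fun z => - g z * u z * (exp (- z) / q z ^ n)
                     + u z * (exp (- z) / q z ^ n * (/ q z - 1)))); [lra|].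
  intros z Hz. destruct (u_ode z Hz) as [Hdu Hu0], (g_ge z Hz) as [Hsz Hgz].
  assert (Hsq : s z <= q z) by exact (s_le z Hz).
  split.
  - apply (is_derive_mult u (fun z => exp (- z) / q z ^ n)); [exact Hdu | | exact Rmult_comm].
    apply is_derive_exp_div_pow; [exact n_pos | change (0 < q z); lra].
  - assert (0 <= u z * (exp (- z) / q z ^ n)).
    { apply Rmult_le_pos; [exact Hu0|].
      apply Rdiv_le_0_compat; [apply Rlt_le, exp_pos | apply pow_lt; lra]. }
    assert (/ q z <= / s z) by (apply Rinv_le_contravar; lra).
    nra.
Qed.

Lemma le_pow_of_is_derive_opp_mul : 0 < d -> u T <= u (T - d) * exp d * (INR n * s T / d) ^ n.
Proof.
  intros Hd. assert (HN : 0 < INR n) by (apply lt_0_INR; lia).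
  pose proof (le_exp_div_pow_mul (Rlt_le _ _ Hd)) as Hmono.
  assert (HsT : 0 < s T) by (apply g_ge; lra).
  assert (Hud : 0 <= u (T - d)) by (apply u_ode; lra).
  assert (Hinv : / (s T + d / INR n) ^ n <= (INR n / d) ^ n).
  { replace (INR n / d) with (/ (d / INR n)) by (field; lra). rewrite pow_inv.
    apply Rinv_le_contravar; [apply pow_lt, Rdiv_lt_0_compat; lra|].
    apply pow_incr; split; [apply Rdiv_le_0_compat |]; lra. }
  assert (HsTn : s T ^ n <> 0) by (apply pow_nonzero; lra).
  assert (HeT : exp T <> 0) by (apply Rgt_not_eq, exp_pos).
  replace (u T) with (u T * (exp (- T) / s T ^ n) * (exp T * s T ^ n))
    by (rewrite exp_Ropp; field; tauto).
  replace (u (T - d) * exp d * (INR n * s T / d) ^ n)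
    with (u (T - d) * exp (- (T - d)) * (INR n / d) ^ n * (exp T * s T ^ n))
    by (replace (exp d) with (exp (- (T - d)) * exp T) by (rewrite <- exp_plus; f_equal; ring);
        unfold Rdiv; rewrite !Rpow_mult_distr; ring).
  apply Rmult_le_compat_r; [apply Rmult_le_pos; [apply Rlt_le, exp_pos | apply pow_le; lra]|].
  eapply Rle_trans; [exact Hmono|]. unfold Rdiv. rewrite <- Rmult_assoc.
  apply Rmult_le_compat_l; [apply Rmult_le_pos; [exact Hud | apply Rlt_le, exp_pos] | exact Hinv].
Qed.

End Comparison.

Lemma B_pos h t : 0 < B h t.
Proof. apply exp_pos. Qed.

Section Profile.

Variable h : R -> R.
Hypothesis h_smooth : smooth h.
Hypothesis h_left : forall T, T <= 0 -> h T = PI / 2.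
Hypothesis h_mid : forall T, 0 < T < 1 -> 0 < h T < PI / 2.
Hypothesis h_right : forall T, 1 <= T -> h T = 0.

Lemma ex_derive_h t : ex_derive h t.
Proof. exact (h_smooth 1%nat t). Qed.

Lemma sin_h_cos_h_bounds t : t < 1 -> 0 < sin (h t) <= 1 /\ 0 <= cos (h t).
Proof.
  intros Ht. pose proof PI_RGT_0. destruct (Rle_lt_dec t 0) as [Ht0 | Ht0].
  - rewrite h_left, sin_PI2, cos_PI2 by exact Ht0; lra.
  - destruct (h_mid t (conj Ht0 Ht)).
    split; [split; [apply sin_gt_0 | apply SIN_bound] | apply cos_ge_0]; lra.
Qed.

Lemma sin_h_1 : sin (h 1) = 0.
Proof. rewrite h_right by lra; apply sin_0. Qed.

Lemma sin_h_nonneg t : 0 <= sin (h t).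
Proof.
  destruct (Rlt_le_dec t 1) as [Ht | Ht].
  - apply Rlt_le, sin_h_cos_h_bounds, Ht.
  - rewrite h_right, sin_0 by exact Ht; lra.
Qed.

Lemma Cinf_sin_h : Cinf (fun t => sin (h t)).
Proof. apply Cinf_sin, smooth_Cinf, h_smooth. Qed.

Lemma Cinf_cos_h : Cinf (fun t => cos (h t)).
Proof. apply Cinf_cos, smooth_Cinf, h_smooth. Qed.

Lemma Derive_sin_h_1 : Derive (fun t => sin (h t)) 1 = 0.
Proof.
  pose proof (ex_derive_Reals_0 _ _ (Cinf_ex_derive _ 1 Cinf_sin_h)) as pr.
  rewrite <- (Derive_Reals _ _ pr). apply (deriv_minimum _ 0 2 1 pr); [lra | lra|].
  intros x _ _. rewrite sin_h_1. apply sin_h_nonneg.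
Qed.

Lemma cot_h_bounds t : t < 1 -> 0 <= cot (h t) /\ / sin (h t) - 1 <= cot (h t).
Proof.
  intros Ht. destruct (sin_h_cos_h_bounds t Ht) as [[Hs Hs1] Hc].
  pose proof (sin2_cos2 (h t)) as Hsc. unfold Rsqr in Hsc.
  assert (Hc1 : cos (h t) <= 1) by apply COS_bound.
  assert (1 - sin (h t) <= cos (h t)) by nra.
  unfold cot; split.
  - apply Rdiv_le_0_compat; lra.
  - apply (Rmult_le_reg_r (sin (h t))); [exact Hs|].
    field_simplify; lra.
Qed.

Lemma continuous_cot_h t : t < 1 -> continuous (fun z => cot (h z)) t.
Proof.
  intros Ht. apply (ex_derive_continuous (fun z => cot (h z))). unfold cot.
  pose proof (sin_h_cos_h_bounds t Ht).
  auto_derive; repeat split; try apply ex_derive_h; lra.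
Qed.

Lemma ex_RInt_cot_h x : x < 1 -> ex_RInt (fun z => cot (h z)) 0 x.
Proof.
  intros Hx. apply (ex_RInt_continuous (V := R_CompleteNormedModule)).
  intros z [_ Hz]. apply continuous_cot_h.
  eapply Rle_lt_trans; [exact Hz|]. apply Rmax_lub_lt; lra.
Qed.

Lemma is_derive_RInt_cot_h t : t < 1 ->
  is_derive (fun x => RInt (fun z => cot (h z)) 0 x) t (cot (h t)).
Proof.
  intros Ht. apply (is_derive_RInt (fun z => cot (h z)) _ 0); [|exact (continuous_cot_h t Ht)].
  apply (filter_imp (fun x => x < 1)); [|exact (open_lt 1 t Ht)].
  intros x Hx. apply (RInt_correct (V := R_CompleteNormedModule)), ex_RInt_cot_h, Hx.
Qed.

Lemma is_derive_invB t : t < 1 -> is_derive (fun x => / B h x) t (- cot (h t) * / B h t).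
Proof.
  intros Ht. unfold B.
  apply (is_derive_ext (fun x => exp (- RInt (fun z => cot (h z)) 0 x))).
  { intros x; apply exp_Ropp. }
  rewrite <- exp_Ropp.
  apply (is_derive_comp exp (fun x => - RInt (fun z => cot (h z)) 0 x)).
  - apply is_derive_exp.
  - apply (is_derive_opp (fun x => RInt (fun z => cot (h z)) 0 x)), is_derive_RInt_cot_h, Ht.
Qed.

Lemma invB_le_1 t : 0 <= t < 1 -> / B h t <= 1.
Proof.
  intros Ht. rewrite <- Rinv_1. apply Rinv_le_contravar; [lra|].
  assert (0 <= RInt (fun z => cot (h z)) 0 t).
  { apply RInt_ge_0; [lra | apply ex_RInt_cot_h; lra |].
    intros z Hz; apply cot_h_bounds; lra. }
  pose proof (exp_ineq1_le (RInt (fun z => cot (h z)) 0 t)). unfold B; lra.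
Qed.

Lemma sin_h_lipschitz_near_1 n : (0 < n)%nat -> exists d, 0 < d /\ 2 * d <= 1 /\
  forall T z, 1 - d < T < 1 -> T - d <= z <= T -> sin (h z) <= sin (h T) + (T - z) / INR n.
Proof.
  intros Hn. assert (HN : 0 < / INR n) by (apply Rinv_0_lt_compat, lt_0_INR; lia).
  set (s := fun t => sin (h t)).
  assert (Hs' : continuous (Derive s) 1) by apply Cinf_continuous, Cinf_Derive, Cinf_sin_h.
  destruct (proj1 (filterlim_locally _ _) Hs' (mkposreal _ HN)) as [del Hdel].
  set (d := Rmin del 1 / 2).
  assert (Hd_del : 2 * d <= del) by (pose proof (Rmin_l del 1); unfold d; lra).
  exists d; split; [|split].
  - apply Rdiv_lt_0_compat; [apply Rmin_pos; [apply cond_pos | lra] | lra].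
  - pose proof (Rmin_r del 1); unfold d; lra.
  - intros T z HT Hz.
    assert (Hvar : Rabs (s z - s T) <= / INR n * Rabs (z - T)).
    { apply (bounded_variation s (Derive s)). intros t Ht. split.
      - apply Derive_correct, Cinf_ex_derive, Cinf_sin_h.
      - rewrite (Rabs_left1 (z - T)) in Ht by lra. apply Rabs_le_between in Ht.
        assert (Hball : ball 1 del t) by (change (Rabs (t - 1) < del); apply Rabs_lt_between; lra).
        specialize (Hdel t Hball). change (Rabs (Derive s t - Derive s 1) < / INR n) in Hdel.
        unfold s in Hdel at 2; rewrite Derive_sin_h_1, Rminus_0_r in Hdel. lra. }
    unfold s in Hvar. rewrite (Rabs_left1 (z - T)) in Hvar by lra. apply Rabs_le_between in Hvar.
    replace ((T - z) / INR n) with (/ INR n * - (z - T)) by (unfold Rdiv; ring). lra.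
Qed.

Lemma invB_le_pow_sin_h n : (0 < n)%nat ->
  exists K, at_left 1 (fun T => / B h T <= K * sin (h T) ^ n).
Proof.
  intros Hn. destruct (sin_h_lipschitz_near_1 n Hn) as [d [Hd [Hd_1 Hlip]]].
  exists (exp 1 * (INR n / d) ^ n), (mkposreal d Hd).
  intros T HT HT1. change (Rabs (T - 1) < d) in HT. rewrite Rabs_left in HT by lra.
  eapply Rle_trans.
  { apply (le_pow_of_is_derive_opp_mul (fun x => / B h x) (fun z => cot (h z))
             (fun z => sin (h z)) n T d Hn); [| | |exact Hd].
    - intros z Hz; split; [apply is_derive_invB; lra | apply Rlt_le, Rinv_0_lt_compat, B_pos].
    - intros z Hz; split; [apply sin_h_cos_h_bounds | apply cot_h_bounds]; lra.
    - intros z Hz; apply Hlip; lra. }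
  replace ((INR n * sin (h T) / d) ^ n) with ((INR n / d) ^ n * sin (h T) ^ n)
    by (unfold Rdiv; rewrite !Rpow_mult_distr; ring).
  rewrite (Rmult_assoc (exp 1)). apply Rmult_le_compat_r.
  { apply Rmult_le_pos; apply pow_le; [|apply sin_h_nonneg].
    apply Rdiv_le_0_compat; [apply pos_INR | lra]. }
  assert (/ B h (T - d) <= 1) by (apply invB_le_1; lra).
  assert (exp d <= exp 1) by (apply Rlt_le, exp_increasing; lra).
  pose proof (exp_pos d). pose proof (Rinv_0_lt_compat _ (B_pos h (T - d))). nra.
Qed.

Lemma Derive_n_invB n : exists a, Cinf a /\
  forall t, t < 1 -> Derive_n (fun x => / B h x) n t = a t / sin (h t) ^ n * / B h t.
Proof.
  induction n as [|n [a [Ha Hn]]].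
  { exists (fun _ => 1); split; [apply Cinf_const|].
    intros t _; simpl; field; apply Rgt_not_eq, B_pos. }
  set (s := fun t => sin (h t)).
  exists (fun t => Derive a t * s t - INR n * a t * Derive s t - a t * cos (h t)). split.
  { apply Cinf_minus; [apply Cinf_minus|]; apply Cinf_mult;
      auto using Cinf_Derive, Cinf_const, Cinf_mult, Cinf_sin_h, Cinf_cos_h. }
  intros t Ht. simpl.
  rewrite (Derive_ext_loc _ (fun x => a x / s x ^ n * / B h x)).
  2: { apply (filter_imp (fun x => x < 1)); [intros x Hx; apply Hn, Hx | exact (open_lt 1 t Ht)]. }
  destruct (sin_h_cos_h_bounds t Ht) as [[Hst _] _].
  assert (Hsn : s t ^ n <> 0) by (apply pow_nonzero; unfold s; lra).
  pose proof (B_pos h t).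
  apply is_derive_unique.
  replace (_ / _ * _) with ((Derive a t * s t - INR n * a t * Derive s t) / s t ^ S n * / B h t
                            + a t / s t ^ n * (- cot (h t) * / B h t))
    by (unfold cot, s in *; simpl; field; repeat split; lra).
  apply (is_derive_mult (fun x => a x / s x ^ n) (fun x => / B h x));
    [| apply is_derive_invB, Ht | exact Rmult_comm].
  apply is_derive_div_pow; [| |unfold s; lra]; apply Derive_correct, Cinf_ex_derive;
    [exact Ha | exact Cinf_sin_h].
Qed.

Lemma sin_h_tendsto_0 : filterlim (fun t => sin (h t)) (at_left 1) (locally 0).
Proof.
  apply (filterlim_filter_le_1 (F := locally 1)); [apply filter_le_within|].
  pose proof (Cinf_continuous _ 1 Cinf_sin_h) as Hc. unfold continuous in Hc.
  rewrite sin_h_1 in Hc. exact Hc.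
Qed.

Lemma Derive_n_invB_tendsto_0 n :
  filterlim (Derive_n (fun x => / B h x) n) (at_left 1) (locally 0).
Proof.
  destruct (Derive_n_invB n) as [a [Ha HDn]].
  destruct (invB_le_pow_sin_h (S n) (Nat.lt_0_succ n)) as [K HK].
  apply (filterlim_0_of_abs_le _ _ (fun t => sin (h t)) ((Rabs (a 1) + 1) * K));
    [|exact sin_h_tendsto_0].
  assert (Ha1 : at_left 1 (fun t => Rabs (a t) <= Rabs (a 1) + 1)).
  { apply filter_le_within.
    refine (filter_imp _ _ _
              (proj1 (filterlim_locally _ _) (Cinf_continuous _ 1 Ha) (mkposreal 1 Rlt_0_1))).
    intros t Ht; change (Rabs (a t - a 1) < 1) in Ht.
    pose proof (Rabs_triang_inv (a t) (a 1)); lra. }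
  assert (Hlt : at_left 1 (fun t => t < 1)) by (apply (filter_forall (F := locally 1)); tauto).
  refine (filter_imp _ _ _ (filter_and _ _ Hlt (filter_and _ _ Ha1 HK))).
  intros T [HT [HaT HKT]].
  destruct (sin_h_cos_h_bounds T HT) as [[HsT _] _].
  assert (HsTn : 0 < sin (h T) ^ n) by (apply pow_lt, HsT).
  pose proof (Rinv_0_lt_compat _ (B_pos h T)).
  rewrite HDn by exact HT.
  replace (a T / sin (h T) ^ n * / B h T) with (a T * (/ B h T / sin (h T) ^ n)).
  2: { field; split; apply Rgt_not_eq; [apply B_pos | exact HsTn]. }
  rewrite Rabs_mult, (Rabs_pos_eq (/ B h T / sin (h T) ^ n)) by (apply Rdiv_le_0_compat; lra).
  rewrite Rmult_assoc.
  apply Rmult_le_compat; [apply Rabs_pos | apply Rdiv_le_0_compat; lra | exact HaT |].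
  replace (K * sin (h T)) with (K * sin (h T) ^ S n / sin (h T) ^ n) by (simpl; field; lra).
  apply Rmult_le_compat_r; [apply Rlt_le, Rinv_0_lt_compat, HsTn | exact HKT].
Qed.

Lemma invB_tendsto_0_right : filterlim (fun x => / B h x) (at_left 1) (at_right 0).
Proof.
  intros P HP; unfold filtermap. apply (filter_imp (fun T => 0 < / B h T -> P (/ B h T))).
  - intros T HT; apply HT, Rinv_0_lt_compat, B_pos.
  - exact (Derive_n_invB_tendsto_0 0 _ HP).
Qed.

End Profile.

Theorem mainTheorem1 (h : R -> R)
  (h_smooth : smooth h)
  (h_left : forall T, T <= 0 -> h T = PI / 2)
  (h_mid : forall T, 0 < T < 1 -> 0 < h T < PI / 2)
  (h_right : forall T, 1 <= T -> h T = 0) :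
  filterlim (B h) (at_left 1) (Rbar_locally p_infty) /\
  (forall n : nat,
     filterlim (fun T => Derive_n (fun t => / B h t) n T) (at_left 1) (locally 0)).
Proof.
  split.
  - apply (filterlim_ext (fun T => / / B h T)); [intros T; apply Rinv_inv|].
    apply (filterlim_comp _ _ _ (fun T => / B h T) Rinv _ (at_right 0)).
    + exact (invB_tendsto_0_right h h_smooth h_left h_mid h_right).
    + exact filterlim_Rinv_0_right.
  - exact (Derive_n_invB_tendsto_0 h h_smooth h_left h_mid h_right).
Qed.
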